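(* Let $w,n,g$ be positive integers with $w\le n$, let $a$ be the remainder of $n$ divided by $w$, and suppose $ga<w$. Suppose that $r:=\binom{n}{w}/\lfloor n/w\rfloor$ and $p:=r/g$ are both integers. Suppose that there exists a $g^{*}$-good almost-regular edge-coloring of $K_n^w$ and that there exists an orthogonal array $\mathrm{OA}(w,2w-1,g)$. Then there exists a $\mathrm{TOC}_q(n,2w-1,w)$, where $q=g+1$.
   Context: $\mathcal{H}_q(n,w)$ is the set of all words of length $n$ over $\mathbb{Z}_q$ with exactly $w$ nonzero entries, with the Hamming distance. An $(n,d,w)_q$-code is a nonempty subset of $\mathcal{H}_q(n,w)$ with pairwise Hamming distances at least $d$; $A_q(n,d,w)$ is the maximum size of such a code and a code of this size is optimal. A $\mathrm{TOC}_q(n,d,w)$ is a partition of $\mathcal{H}_q(n,w)$ into optimal $(n,d,w)_q$-codes. $K_n^w$ is the complete $w$-uniform hypergraph on $[n]$. A sub-hypergraph with vertex set $[n]$ is almost-regular if any two vertex degrees differ by at most one. An almost-regular edge-coloring $\{\mathcal{F}_{i,j}:1\le i\le r/g,\,1\le j\le g\}$ of $K_n^w$ is a partition of its edges into classes, each an almost-regular sub-hypergraph on $[n]$ with exactly $\lfloor n/w\rfloor$ edges. It is $g$-good if each $\mathcal{A}_i=\bigcup_{j=1}^g\mathcal{F}_{i,j}$ is the block set of a packing $\mathrm{P}(2,w,n)$ (every pair of points in at most one edge of $\mathcal{A}_i$), and $g^{*}$-good if moreover, for each $i$, the vertex set $[n]$ can be partitioned into $w$ classes so that every edge of $\mathcal{A}_i$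 meets each class in at most one vertex (a strong $w$-coloring). An orthogonal array $\mathrm{OA}(t,k,s)$ is an $s^t\times k$ array over an $s$-symbol alphabet such that in every choice of $t$ columns each ordered $t$-tuple of symbols appears in exactly one row. *)

From mathcomp Require Import all_boot.
Set Implicit Arguments. Unset Strict Implicit. Unset Printing Implicit Defensive.

(* Words of length n over Z_q, represented with symbols 'I_q (0 = zero symbol). *)
Definition word (q n : nat) := {ffun 'I_n -> 'I_q}.

Definition wsupp (q n : nat) (x : word q n) : {set 'I_n} :=
  [set i | nat_of_ord (x i) != 0%N].

Definition Hqnw (q n w : nat) : {set word q n} := [set x | #|wsupp x| == w].

Definition hdist (q n : nat) (x y : word q n) : nat := #|[set i | x i != y i]|.

Definition is_code (q n d w : nat) (C : {set word q n}) : bool :=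
  [&& C \subset Hqnw q n w, C != set0 &
      [forall x in C, forall y in C, (x != y) ==> (d <= hdist x y)]].

Definition Aq (q n d w : nat) : nat :=
  \max_(C : {set word q n} | is_code d w C) #|C|.

Definition optimal_code (q n d w : nat) (C : {set word q n}) : bool :=
  is_code d w C && (#|C| == Aq q n d w).

Definition TOC (q n d w : nat) : Prop :=
  exists P : {set {set word q n}},
    partition P (Hqnw q n w) /\ forall C, C \in P -> optimal_code d w C.

Definition Knw_edge (n w : nat) (e : {set 'I_n}) : bool := #|e| == w.

Definition hdeg (n : nat) (F : {set {set 'I_n}}) (v : 'I_n) : nat :=
  #|[set e in F | v \in e]|.

Definition almost_regular (n : nat) (F : {set {set 'I_n}}) : Prop :=
  forall u v : 'I_n, hdeg F u <= (hdeg F v).+1.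

(* almost-regular edge-coloring {F_{i,j} : i < r/g, j < g} of K_n^w *)
Definition ar_edge_coloring (n w p g : nat) (F : 'I_p -> 'I_g -> {set {set 'I_n}})
  : Prop :=
  (forall i j e, e \in F i j -> Knw_edge w e) /\
  (forall e : {set 'I_n}, Knw_edge w e ->
     exists! ij : 'I_p * 'I_g, e \in F ij.1 ij.2) /\
  (forall i j, almost_regular (F i j)) /\
  (forall i j, #|F i j| = n %/ w).

Definition Ablock (n p g : nat) (F : 'I_p -> 'I_g -> {set {set 'I_n}}) (i : 'I_p)
  : {set {set 'I_n}} := \bigcup_(j < g) F i j.

Definition is_packing (n : nat) (A : {set {set 'I_n}}) : Prop :=
  forall x y : 'I_n, x != y -> #|[set e in A | (x \in e) && (y \in e)]| <= 1.

Definition g_good (n w p g : nat) (F : 'I_p -> 'I_g -> {set {set 'I_n}}) : Prop :=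
  @ar_edge_coloring n w p g F /\ forall i, is_packing (Ablock F i).

(* strong w-coloring: partition of [n] into w classes (given by c) such that
   every edge meets each class in at most one vertex *)
Definition gstar_good (n w p g : nat) (F : 'I_p -> 'I_g -> {set {set 'I_n}}) : Prop :=
  @g_good n w p g F /\
  forall i, exists c : 'I_n -> 'I_w,
    forall e, e \in Ablock F i -> forall k : 'I_w, #|[set v in e | c v == k]| <= 1.

Definition is_OA (t k s : nat) (M : 'I_(s ^ t) -> 'I_k -> 'I_s) : Prop :=
  forall c : 'I_t -> 'I_k, injective c ->
    forall u : 'I_t -> 'I_s, exists! rho : 'I_(s ^ t), forall l, M rho (c l) = u l.

Definition OA_exists (t k s : nat) : Prop :=
  exists M : 'I_(s ^ t) -> 'I_k -> 'I_s, is_OA M.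

From mathcomp Require Import all_boot zify.

(* Two words of an (n, 2w-1, w)_q code whose supports contain a coordinate i
   cannot carry the same symbol at i, or they would be at distance at most
   2w-2; so each coordinate lies in the support of at most q-1 codewords, and
   counting incidences gives |C| w <= n (q-1).  When g (n mod w) < w this
   yields A_{g+1}(n, 2w-1, w) <= g floor(n/w).

   Conversely, a colour class F_{i,j} is almost regular with floor(n/w) edges
   of size w, hence a matching, and two edges of A_i share at most one vertex.
   Fix a strong colouring c_i of A_i and any u : [w] -> Z_g, and give each
   edge e of F_{i,j} the word with support e and symbol u(c_i v) + j (in Z_g,
   moved to the nonzero symbols) at v.  These g floor(n/w) words are pairwise
   at distance >= 2w-1: edges of one class are disjoint, and edges of two
   classes meet in at most one vertex, where their symbols differ.  Since c_i
   is a bijection from every edge onto [w], a word with support e in F_{i,j}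
   determines u, so the p g^w codes obtained partition H_{g+1}(n, w).  The
   codes are indexed by all u, i.e. by the trivial OA(w, w, g). *)

Set Implicit Arguments.
Unset Strict Implicit.
Unset Printing Implicit Defensive.

Lemma double_counting (T U : finType) (A : {set T}) (E : T -> {set U}) :
  \sum_(a in A) #|E a| = \sum_b #|[set a in A | b \in E a]|.
Proof.
under eq_bigr => a _ do rewrite -sum1_card.
under [RHS]eq_bigr => b _ do rewrite -sum1dep_card.
exact: (exchange_big_dep xpredT).
Qed.

Lemma card_nonzero_symbols q : #|[set k : 'I_q | val k != 0]| = q.-1.
Proof.
case: q => [|q]; first by apply/eqP; rewrite cards_eq0 -subset0; apply/subsetP => -[].
have -> : [set k : 'I_q.+1 | val k != 0] = [set~ ord0].
  by apply/setP => k; rewrite !inE -val_eqE.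
by rewrite cardsC1 card_ord.
Qed.

Section ConstantWeightCodes.
Variables q n w : nat.
Implicit Types (x y : word q n) (C : {set word q n}).

Lemma hdist_lt_cardsU x y i :
  i \in wsupp x -> x i = y i -> hdist x y < #|wsupp x :|: wsupp y|.
Proof.
move=> ix xyi; rewrite /hdist (cardsD1 i) inE ix ltnS.
apply: subset_leq_card; apply/subsetP => k; rewrite !inE => xyk.
apply/andP; split; first by apply: contraNneq xyk => ->; rewrite xyi.
apply: contraNT xyk; rewrite negb_or !negbK => /andP [/eqP xk /eqP yk].
by apply/eqP/val_inj; rewrite /= xk yk.
Qed.

Lemma code_wsupp d C x : is_code d w C -> x \in C -> #|wsupp x| = w.
Proof. by case/and3P => /subsetP HC _ _ /HC; rewrite inE => /eqP. Qed.

Lemma code_coord_inj C i :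
  is_code (2 * w - 1) w C ->
  {in [set x in C | i \in wsupp x] &, injective (fun x => x i)}.
Proof.
move=> codeC x y /setIdP [xC ix] /setIdP [yC iy] xyi.
apply/eqP; apply: contraT => xy.
have := hdist_lt_cardsU ix xyi.
have /and3P [_ _ /forall_inP/(_ x xC)/forall_inP/(_ y yC)/implyP/(_ xy)] := codeC.
have : 0 < #|wsupp x :&: wsupp y| by apply/card_gt0P; exists i; rewrite inE ix iy.
have := cardsUI (wsupp x) (wsupp y).
rewrite (code_wsupp codeC xC) (code_wsupp codeC yC); lia.
Qed.

Lemma code_coord_card C i :
  is_code (2 * w - 1) w C -> #|[set x in C | i \in wsupp x]| <= q.-1.
Proof.
move=> codeC; rewrite -(card_in_imset (code_coord_inj (i := i) codeC)).
rewrite -card_nonzero_symbols; apply: subset_leq_card.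
by apply/subsetP => k /imsetP [x /setIdP [_ +] ->]; rewrite !inE.
Qed.

Lemma code_card_le C : is_code (2 * w - 1) w C -> #|C| * w <= n * q.-1.
Proof.
move=> codeC; rewrite -sum_nat_const.
rewrite (eq_bigr (fun x => #|wsupp x|)) => [|x xC]; last exact: esym (code_wsupp codeC xC).
rewrite double_counting -[X in X * _]card_ord -sum_nat_const.
by apply: leq_sum => i _; apply: code_coord_card.
Qed.

End ConstantWeightCodes.

Lemma Aq_le (n w g : nat) :
  g * (n %% w) < w -> Aq g.+1 n (2 * w - 1) w <= g * (n %/ w).
Proof.
move=> small_rem; apply/bigmax_leqP => C /code_card_le /=.
have := divn_eq n w; nia.
Qed.

Section Hypergraphs.
Variable n : nat.
Implicit Types (F A : {set {set 'I_n}}) (e : {set 'I_n}).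

Lemma sum_hdeg w F : {in F, forall e, #|e| = w} -> \sum_v hdeg F v = #|F| * w.
Proof.
move=> Fw; rewrite /hdeg -(double_counting F id) -sum_nat_const.
exact: eq_bigr.
Qed.

Lemma almost_regular_hdeg_le1 F :
  almost_regular F -> \sum_v hdeg F v <= n -> forall v, hdeg F v <= 1.
Proof.
move=> reg sum_le v0; rewrite leqNgt; apply: contraTN sum_le => deg_v0.
rewrite -ltnNge (bigD1 v0) //=.
apply: (@leq_trans (2 + \sum_(v | v != v0) 1)).
  by rewrite sum1_card cardC1 card_ord; have := ltn_ord v0; lia.
by apply: leq_add => //; apply: leq_sum => v _; have := reg v0 v; lia.
Qed.

Lemma hdeg_le1_eq F v e e' :
  hdeg F v <= 1 -> e \in F -> e' \in F -> v \in e -> v \in e' -> e = e'.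
Proof.
by move=> /card_le1_eqP deg eF e'F ve ve'; apply: deg; rewrite inE ?eF ?e'F.
Qed.

Lemma packing_meet A e e' :
  is_packing A -> e \in A -> e' \in A -> e != e' -> #|e :&: e'| <= 1.
Proof.
move=> pack eA e'A; apply: contraNT; rewrite -ltnNge => /card_gt1P [x [y []]].
rewrite !inE => /andP [xe xe'] /andP [ye ye'] xy; apply/eqP.
by have /card_le1_eqP := pack x y xy; apply; rewrite inE ?eA ?e'A ?xe ?ye ?xe' ?ye'.
Qed.

End Hypergraphs.

Section StrongColouring.
Variables (n w : nat) (c : 'I_n -> 'I_w) (e : {set 'I_n}).
Hypothesis c_strong : forall k, #|[set v in e | c v == k]| <= 1.

Lemma strong_colouring_inj : {in e &, injective c}.
Proof.
move=> v v' ve v'e cv; have /card_le1_eqP := c_strong (c v).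
by apply; rewrite inE ?ve ?v'e -?cv eqxx.
Qed.

Lemma strong_colouring_surj : #|e| = w -> forall k, exists2 v, v \in e & c v = k.
Proof.
move=> card_e k; have im_e : c @: e = setT.
  apply/eqP; rewrite eqEcard subsetT cardsT card_ord card_in_imset ?card_e ?leqnn //.
  exact: strong_colouring_inj.
have /imsetP [v ve ->] : k \in c @: e by rewrite im_e inE.
by exists v.
Qed.

End StrongColouring.

Definition edge_word (n w g : nat) (c : 'I_n -> 'I_w) (u : {ffun 'I_w -> 'I_g})
    (e : {set 'I_n}) (j : 'I_g) : word g.+1 n :=
  [ffun v => if v \in e then inord ((u (c v) + j) %% g).+1 else ord0].

Section EdgeWords.
Variables (n w g : nat) (c : 'I_n -> 'I_w).
Implicit Types (u : {ffun 'I_w -> 'I_g}) (e : {set 'I_n}) (j : 'I_g).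

Lemma edge_wordE u e j v :
  nat_of_ord (edge_word c u e j v) = if v \in e then ((u (c v) + j) %% g).+1 else 0.
Proof.
rewrite ffunE; case: ifP => // _; rewrite inordK // ltnS ltn_pmod //.
exact: leq_ltn_trans (leq0n j) (ltn_ord j).
Qed.

Lemma wsupp_edge_word u e j : wsupp (edge_word c u e j) = e.
Proof. by apply/setP => v; rewrite inE edge_wordE; case: (v \in e). Qed.

Lemma edge_word_neq u e e' j j' v :
  v \in e :|: e' -> (v \in e -> v \in e' -> j != j') ->
  edge_word c u e j v != edge_word c u e' j' v.
Proof.
move=> ee' jj'; apply/eqP => /(congr1 (@nat_of_ord _)); rewrite !edge_wordE.
move: ee' jj'; rewrite inE; case: (v \in e); case: (v \in e') => //= _ /(_ isT isT) jj'.
move/succn_inj/eqP; rewrite eqn_modDl !modn_small // => /eqP jj.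
by move/negP: jj'; apply; apply/eqP/val_inj.
Qed.

Lemma edge_word_eq_coord u u' e j v :
  v \in e -> edge_word c u e j = edge_word c u' e j -> u (c v) = u' (c v).
Proof.
move=> ve /(congr1 (fun x : word g.+1 n => nat_of_ord (x v))); rewrite !edge_wordE ve.
by move/succn_inj/eqP; rewrite eqn_modDr !modn_small // => /eqP /val_inj.
Qed.

End EdgeWords.

Section BlockCodes.
Variables (n w g p : nat) (F : 'I_p -> 'I_g -> {set {set 'I_n}}).
Variable c : 'I_p -> 'I_n -> 'I_w.
Hypothesis Fcol : ar_edge_coloring w F.
Hypothesis Fpack : forall i, is_packing (Ablock F i).
Hypothesis c_strong :
  forall i e, e \in Ablock F i -> forall k, #|[set v in e | c i v == k]| <= 1.
Hypotheses (g_gt0 : 0 < g) (w_le_n : w <= n) (small_rem : g * (n %% w) < w).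

Let w_gt0 : 0 < w := leq_ltn_trans (leq0n _) small_rem.

Lemma card_edge i j e : e \in F i j -> #|e| = w.
Proof. by case: Fcol => edges _ /edges /eqP. Qed.

Lemma card_colour_class i j : #|F i j| = n %/ w.
Proof. by case: Fcol => _ [_ [_]]. Qed.

Lemma edge_colour_uniq i j i' j' e :
  e \in F i j -> e \in F i' j' -> (i, j) = (i', j').
Proof.
move=> eF eF'; have [edges [/(_ e (edges _ _ _ eF)) [ij [_ ij_uniq]] _]] := Fcol.
by rewrite -(ij_uniq (i, j)) // -(ij_uniq (i', j')).
Qed.

Lemma mem_Ablock i j e : e \in F i j -> e \in Ablock F i.
Proof. by move=> eF; apply/bigcupP; exists j. Qed.

Lemma colour_class_matching i j e e' v :
  e \in F i j -> e' \in F i j -> v \in e -> v \in e' -> e = e'.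
Proof.
case: Fcol => _ [_ [reg _]]; apply: hdeg_le1_eq; apply: (almost_regular_hdeg_le1 (reg i j)).
by rewrite (sum_hdeg (w := w)) ?card_colour_class ?leq_divM // => ?; apply: card_edge.
Qed.

Lemma edge_word_dist i u j j' e e' :
  e \in F i j -> e' \in F i j' -> e != e' ->
  2 * w - 1 <= hdist (edge_word (c i) u e j) (edge_word (c i) u e' j').
Proof.
move=> eF e'F ee'.
have meet := packing_meet (Fpack i) (mem_Ablock eF) (mem_Ablock e'F) ee'.
have : #|e :|: e'| <= hdist (edge_word (c i) u e j) (edge_word (c i) u e' j').
  apply: subset_leq_card; apply/subsetP => v v_ee'; rewrite inE.
  apply: edge_word_neq => // ve ve'; apply: contra_neq ee' => jj'.
  by apply: (colour_class_matching eF) ve ve'; rewrite jj'.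
have := cardsUI e e'; rewrite (card_edge eF) (card_edge e'F); lia.
Qed.

Definition class_edges i : {set 'I_g * {set 'I_n}} := [set je | je.2 \in F i je.1].

Definition block_code i u : {set word g.+1 n} :=
  [set edge_word (c i) u je.2 je.1 | je in class_edges i].

Lemma card_class_edges i : #|class_edges i| = g * (n %/ w).
Proof.
rewrite -sum1dep_card -(pair_big_dep xpredT (fun j e => e \in F i j) (fun _ _ => 1)) /=.
under eq_bigr => j _ do rewrite sum1_card card_colour_class.
by rewrite sum_nat_const card_ord.
Qed.

Lemma edge_word_inj i u :
  {in class_edges i &, injective (fun je => edge_word (c i) u je.2 je.1)}.
Proof.
move=> [j e] [j' e']; rewrite !inE /= => eF e'F same.
have ee' : e = e' by rewrite -(wsupp_edge_word (c i) u e j) same wsupp_edge_word.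
by subst e'; case: (edge_colour_uniq eF e'F) => ->.
Qed.

Lemma card_block_code i u : #|block_code i u| = g * (n %/ w).
Proof. by rewrite card_in_imset ?card_class_edges //; apply: edge_word_inj. Qed.

Lemma block_code_sub i u : block_code i u \subset Hqnw g.+1 n w.
Proof.
apply/subsetP => x /imsetP [[j e]]; rewrite inE /= => eF ->.
by rewrite inE wsupp_edge_word (card_edge eF).
Qed.

Lemma is_code_block_code i u : is_code (2 * w - 1) w (block_code i u).
Proof.
apply/and3P; split; first exact: block_code_sub.
  by rewrite -card_gt0 card_block_code muln_gt0 g_gt0 divn_gt0.
apply/forall_inP => x /imsetP [[j e]]; rewrite inE /= => eF ->.
apply/forall_inP => y /imsetP [[j' e']]; rewrite inE /= => e'F ->.
apply/implyP => words_neq; apply: (edge_word_dist u eF e'F).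
by apply: contraNneq words_neq => ee'; subst e'; case: (edge_colour_uniq eF e'F) => ->.
Qed.

Lemma optimal_block_code i u : optimal_code (2 * w - 1) w (block_code i u).
Proof.
rewrite /optimal_code is_code_block_code eqn_leq {2}card_block_code Aq_le // andbT /=.
by apply: leq_bigmax_cond; apply: is_code_block_code.
Qed.

Lemma block_code_cover x : x \in Hqnw g.+1 n w -> exists i u, x \in block_code i u.
Proof.
rewrite inE => /eqP card_x; have [edges [/(_ _ (introT eqP card_x)) [[i j] [/= xF _]] _]] := Fcol.
have c_inj := strong_colouring_inj (c_strong (mem_Ablock xF)).
(* [sym k] is the symbol of [x] at its vertex of colour [k], shifted back by [j]. *)
pose sym k := if [pick v in wsupp x | c i v == k] is Some v then (x v).-1 + (g - j) else 0.
exists i, [ffun k => Ordinal (ltn_pmod (sym k) g_gt0)].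
apply/imsetP; exists (j, wsupp x); first by rewrite inE.
apply/ffunP => v; apply: val_inj; rewrite /= edge_wordE ffunE /sym.
case: ifPn => [vx | ]; last by rewrite inE negbK => /eqP.
case: pickP => [v' /andP [v'x /eqP /c_inj cv] | /(_ v)]; last by rewrite vx eqxx.
rewrite (cv v'x vx) /= modnDml -addnA subnK ?(ltnW (ltn_ord j)) // modnDr.
move: vx; rewrite inE -lt0n => x_gt0; rewrite modn_small ?prednK // -ltnS.
exact: ltn_ord.
Qed.

Lemma block_code_meet i u i' u' x :
  x \in block_code i u -> x \in block_code i' u' -> (i, u) = (i', u').
Proof.
move=> /imsetP [[j e]]; rewrite inE /= => eF -> /imsetP [[j' e']].
rewrite inE /= => e'F same.
have ee' : e = e' by rewrite -(wsupp_edge_word (c i) u e j) same wsupp_edge_word.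
subst e'; case: (edge_colour_uniq eF e'F) => ii jj; subst i' j'.
congr (_, _); apply/ffunP => k.
have [v ve <-] := strong_colouring_surj (c_strong (mem_Ablock eF)) (card_edge eF) k.
exact: edge_word_eq_coord ve same.
Qed.

Lemma TOC_of_block_codes : TOC g.+1 n (2 * w - 1) w.
Proof.
pose code iu := block_code iu.1 iu.2.
exists (code @: setT); split; last by move=> _ /imsetP [[i u] _ ->]; apply: optimal_block_code.
have set0_notin : set0 \notin code @: setT.
  apply/imsetP => -[[i u] _ /esym/eqP].
  by apply/negP; have /and3P [] := is_code_block_code i u.
have disj : {in setT &, forall iu iu', iu' != iu -> [disjoint code iu & code iu']}.
  move=> [i u] [i' u'] _ _ neq; rewrite -setI_eq0; apply/set0Pn => -[x].
  rewrite inE => /andP [x_iu x_iu'].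
  by move/eqP: neq; apply; rewrite (block_code_meet x_iu x_iu').
have [triv _] := trivIimset disj set0_notin.
apply/and3P; split => //; rewrite cover_imset; apply/eqP/setP => x.
apply/bigcupP/idP => [[iu _ x_iu] | /block_code_cover [i [u x_iu]]].
  exact: subsetP (block_code_sub _ _) x x_iu.
by exists (i, u).
Qed.

End BlockCodes.

Theorem theorem3p4 (w n g : nat) :
  0 < w -> 0 < n -> 0 < g -> w <= n ->
  g * (n %% w) < w ->
  (n %/ w) %| 'C(n, w) ->
  g %| ('C(n, w) %/ (n %/ w)) ->
  (exists F : 'I_(('C(n, w) %/ (n %/ w)) %/ g) -> 'I_g -> {set {set 'I_n}},
      @gstar_good n w _ g F) ->
  OA_exists w (2 * w - 1) g ->
  TOC g.+1 n (2 * w - 1) w.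
Proof.
move=> _ _ g_gt0 w_le_n small_rem _ _ [F [[Fcol Fpack] strong]] _.
have [c c_strong] := fin_all_exists strong.
exact: TOC_of_block_codes Fcol Fpack c_strong g_gt0 w_le_n small_rem.
Qed.
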